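(* Let $G$ be a non-abelian subgroup of $\mathcal{H}(n,\mathbb{C})$ with $\Lambda_G\not\subset\mathbb{R}$ and $G\not\subset\mathcal{SR}_n$. Then $G$ has no discrete orbit, i.e. for every $z\in\mathbb{C}^n$ the orbit $G(z)$ is not a discrete subset of $\mathbb{C}^n$.
   Context: $\mathcal{H}(n,\mathbb{C})$ is the group of all maps $z\mapsto\lambda z+b$ of $\mathbb{C}^n$ with $\lambda\in\mathbb{C}^*$, $b\in\mathbb{C}^n$ ($\lambda$ = ratio). $H_2=(\frac{\pi}{2}+\pi\mathbb{Z})\cup\pi\mathbb{Z}$, $F_2=\{e^{ix}:x\in H_2\}$, $H_3=(\frac{\pi}{3}+\pi\mathbb{Z})\cup(-\frac{\pi}{3}+\pi\mathbb{Z})\cup\pi\mathbb{Z}$, $F_3=\{e^{ix}:x\in H_3\}$; $\mathcal{S}_i\mathcal{R}_n=\{z\mapsto\lambda z+b:\lambda\in F_i, b\in\mathbb{C}^n\}$, $\mathcal{SR}_n=\mathcal{S}_2\mathcal{R}_n\cup\mathcal{S}_3\mathcal{R}_n$. $\Lambda_G$ is the set of ratios of elements of $G$, and $G(z)=\{f(z):f\in G\}$. *)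

From Stdlib Require Import Reals ZArith.
From Stdlib Require Fin.
Open Scope R_scope.

(* Complex numbers C = R x R : (real part, imaginary part). *)
Definition C : Type := (R * R)%type.
Definition C0 : C := (0, 0).
Definition C1 : C := (1, 0).
Definition Cadd (u v : C) : C := (fst u + fst v, snd u + snd v).
Definition Csub (u v : C) : C := (fst u - fst v, snd u - snd v).
Definition Cmul (u v : C) : C :=
  (fst u * fst v - snd u * snd v, fst u * snd v + snd u * fst v).
Definition Cnorm (u : C) : R := sqrt (fst u ^ 2 + snd u ^ 2).
Definition Cexpi (x : R) : C := (cos x, sin x).

Definition Cn (n : nat) : Type := Fin.t n -> C.

(* The map z |-> lambda z + b of C^n, encoded by the pair (lambda, b). *)
Record aff (n : nat) : Type := Aff { ratio : C; trans : Cn n }.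
Arguments Aff {n} _ _.
Arguments ratio {n} _.
Arguments trans {n} _.

Definition act {n} (g : aff n) (z : Cn n) : Cn n :=
  fun i => Cadd (Cmul (ratio g) (z i)) (trans g i).

Definition comp {n} (g h : aff n) : aff n :=
  Aff (Cmul (ratio g) (ratio h))
      (fun i => Cadd (Cmul (ratio g) (trans h i)) (trans g i)).

Definition id_aff (n : nat) : aff n := Aff C1 (fun _ => C0).

Definition in_Hn {n} (g : aff n) : Prop := ratio g <> C0.

Definition is_subgroup_H {n} (G : aff n -> Prop) : Prop :=
  (forall g, G g -> in_Hn g) /\
  G (id_aff n) /\
  (forall g h, G g -> G h -> G (comp g h)) /\
  (forall g, G g -> exists h, G h /\ forall z i, act h (act g z) i = z i).

Definition non_abelian {n} (G : aff n -> Prop) : Prop :=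
  exists g h, G g /\ G h /\ exists z i, act g (act h z) i <> act h (act g z) i.

Definition Lambda {n} (G : aff n -> Prop) (c : C) : Prop :=
  exists g, G g /\ ratio g = c.

Definition is_real (c : C) : Prop := snd c = 0.

Definition H2 (x : R) : Prop :=
  exists k : Z, x = PI / 2 + IZR k * PI \/ x = IZR k * PI.
Definition H3 (x : R) : Prop :=
  exists k : Z, x = PI / 3 + IZR k * PI \/ x = - (PI / 3) + IZR k * PI
                \/ x = IZR k * PI.
Definition F2 (c : C) : Prop := exists x, H2 x /\ c = Cexpi x.
Definition F3 (c : C) : Prop := exists x, H3 x /\ c = Cexpi x.

Definition in_S2Rn {n} (g : aff n) : Prop := F2 (ratio g).
Definition in_S3Rn {n} (g : aff n) : Prop := F3 (ratio g).
Definition in_SRn {n} (g : aff n) : Prop := in_S2Rn g \/ in_S3Rn g.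

Definition orbit {n} (G : aff n -> Prop) (z : Cn n) (w : Cn n) : Prop :=
  exists g, G g /\ forall i, w i = act g z i.

Definition discrete {n} (D : Cn n -> Prop) : Prop :=
  forall x, D x -> exists eps, 0 < eps /\
    forall y, D y -> (forall i, Cnorm (Csub (y i) (x i)) < eps) ->
      forall i, y i = x i.

(** The commutator of two non-commuting elements of G is a translation
    z |-> z + v with v <> 0. The set M of the a in C such that z |-> z + a v
    lies in G is an additive subgroup of C containing 1, and conjugation by an
    element of G with ratio mu multiplies M by mu. If |mu| <> 1, the powers of
    mu or of mu^-1 carry 1 to nonzero elements of M of arbitrarily small
    modulus. If |mu| = 1, then mu^-1 is the conjugate of mu, so M is also
    stable under mu + mu^-1 = 2 Re mu, hence under the fractional part of
    2 Re mu, which is a contraction unless 2 Re mu is an integer; and an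
    integer 2 Re mu in [-2, 2] puts mu in F_2 or F_3. So every orbit G(z)
    contains points z + a v <> z arbitrarily close to z. *)

From Stdlib Require Import Reals ZArith Lra Lia Psatz.
From Stdlib Require Fin.
Open Scope R_scope.

Definition Copp (u : C) : C := (- fst u, - snd u).

Lemma C_ext (u v : C) : fst u = fst v -> snd u = snd v -> u = v.
Proof. destruct u, v; simpl; intros -> ->; reflexivity. Qed.

Ltac Cring := unfold Cmul, Cadd, Csub, Copp, C1, C0; apply C_ext; simpl; ring.

Lemma C1_neq0 : C1 <> C0.
Proof. intro E; injection E; lra. Qed.

Lemma Cnorm_ge0 (u : C) : 0 <= Cnorm u.
Proof. apply sqrt_pos. Qed.

Lemma Cnorm_gt0 (u : C) : u <> C0 -> 0 < Cnorm u.
Proof.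
  destruct u as [x y]; intro Hu; unfold Cnorm; simpl; apply sqrt_lt_R0.
  destruct (Req_dec x 0) as [->|]; destruct (Req_dec y 0) as [->|]; try nra.
  now contradiction Hu.
Qed.

Lemma Cnorm_mul (u v : C) : Cnorm (Cmul u v) = Cnorm u * Cnorm v.
Proof.
  destruct u as [x y], v as [x' y']; unfold Cnorm, Cmul; simpl.
  rewrite <- sqrt_mult by nra; f_equal; ring.
Qed.

Lemma Cnorm_real (x : R) : Cnorm (x, 0) = Rabs x.
Proof. unfold Cnorm; simpl; rewrite <- sqrt_Rsqr_abs; f_equal; unfold Rsqr; ring. Qed.

Lemma Cnorm_C1 : Cnorm C1 = 1.
Proof. unfold C1; rewrite Cnorm_real; apply Rabs_R1. Qed.

Lemma Cnorm_eq1 (x y : R) : Cnorm (x, y) = 1 -> x ^ 2 + y ^ 2 = 1.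
Proof.
  unfold Cnorm; cbv [fst snd]; intro H.
  rewrite <- (sqrt_sqrt (x ^ 2 + y ^ 2)) by nra; rewrite H; ring.
Qed.

Lemma Cmul_neq0 (u v : C) : u <> C0 -> v <> C0 -> Cmul u v <> C0.
Proof.
  intros Hu Hv E; apply (f_equal Cnorm) in E.
  rewrite Cnorm_mul in E; unfold C0 in E; rewrite Cnorm_real, Rabs_R0 in E.
  pose proof (Cnorm_gt0 u Hu); pose proof (Cnorm_gt0 v Hv); nra.
Qed.

Fixpoint Cpow (w : C) (k : nat) : C :=
  match k with O => C1 | S k => Cmul w (Cpow w k) end.

Lemma Cnorm_pow (w : C) (k : nat) : Cnorm (Cpow w k) = Cnorm w ^ k.
Proof. induction k; simpl; [apply Cnorm_C1 | now rewrite Cnorm_mul, IHk]. Qed.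

Lemma Cpow_neq0 (w : C) (k : nat) : w <> C0 -> Cpow w k <> C0.
Proof. intro Hw; induction k; simpl; [apply C1_neq0 | now apply Cmul_neq0]. Qed.

Lemma Cinv_unit_circle (x y p q : R) :
  x ^ 2 + y ^ 2 = 1 -> Cmul (p, q) (x, y) = C1 -> p = x /\ q = - y.
Proof.
  intros Hxy E; pose proof (f_equal fst E) as E1; pose proof (f_equal snd E) as E2.
  cbv [Cmul C1 fst snd] in E1, E2; split.
  - transitivity (p * (x ^ 2 + y ^ 2)); [rewrite Hxy; ring |].
    transitivity (x * (p * x - q * y) + y * (p * y + q * x)); [ring |].
    rewrite E1, E2; ring.
  - transitivity (q * (x ^ 2 + y ^ 2)); [rewrite Hxy; ring |].
    transitivity (x * (p * y + q * x) - y * (p * x - q * y)); [ring |].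
    rewrite E1, E2; ring.
Qed.

Lemma F2_quarter_turns (x y : R) :
  (x = 1 /\ y = 0) \/ (x = -1 /\ y = 0) \/ (x = 0 /\ y = 1) \/ (x = 0 /\ y = -1) ->
  F2 (x, y).
Proof.
  intros [[-> ->]|[[-> ->]|[[-> ->]|[-> ->]]]].
  - exists 0; split; [exists 0%Z; right; simpl; ring |].
    unfold Cexpi; now rewrite cos_0, sin_0.
  - exists PI; split; [exists 1%Z; right; simpl; ring |].
    unfold Cexpi; now rewrite cos_PI, sin_PI.
  - exists (PI / 2); split; [exists 0%Z; left; simpl; ring |].
    unfold Cexpi; now rewrite cos_PI2, sin_PI2.
  - exists (PI / 2 + PI); split; [exists 1%Z; left; simpl; ring |].
    unfold Cexpi; rewrite neg_cos, neg_sin, cos_PI2, sin_PI2; f_equal; ring.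
Qed.

Lemma F3_sixth_turns (x y : R) :
  (x = 1 / 2 \/ x = - (1 / 2)) -> (y = sqrt 3 / 2 \/ y = - (sqrt 3 / 2)) -> F3 (x, y).
Proof.
  intros [-> | ->] [-> | ->].
  - exists (PI / 3); split; [exists 0%Z; left; simpl; ring |].
    unfold Cexpi; now rewrite cos_PI3, sin_PI3.
  - exists (- (PI / 3)); split; [exists 0%Z; right; left; simpl; ring |].
    unfold Cexpi; now rewrite cos_neg, sin_neg, cos_PI3, sin_PI3.
  - exists (- (PI / 3) + PI); split; [exists 1%Z; right; left; simpl; ring |].
    unfold Cexpi; rewrite neg_cos, neg_sin, cos_neg, sin_neg, cos_PI3, sin_PI3.
    f_equal; ring.
  - exists (PI / 3 + PI); split; [exists 1%Z; left; simpl; ring |].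
    unfold Cexpi; rewrite neg_cos, neg_sin, cos_PI3, sin_PI3; f_equal; ring.
Qed.

Lemma F2_or_F3_of_half_integer_real_part (x y : R) (m : Z) :
  x ^ 2 + y ^ 2 = 1 -> 2 * x = IZR m -> F2 (x, y) \/ F3 (x, y).
Proof.
  intros Hxy Hm.
  assert (Hrange : (-2 <= m <= 2)%Z) by (split; apply le_IZR; nra).
  assert (Hs : sqrt 3 * sqrt 3 = 3) by (apply sqrt_sqrt; lra).
  assert (Hy : forall c, y ^ 2 = c * c -> y = c \/ y = - c).
  { intros c Hc; assert (Hf : (y - c) * (y + c) = 0) by nra.
    destruct (Rmult_integral _ _ Hf); [left | right]; lra. }
  assert (Hm' : (m = -2 \/ m = -1 \/ m = 0 \/ m = 1 \/ m = 2)%Z) by lia.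
  destruct Hm' as [E|[E|[E|[E|E]]]]; subst m; simpl in Hm.
  - left; apply F2_quarter_turns; right; left; split; nra.
  - right; apply F3_sixth_turns; [right; lra | apply Hy; nra].
  - left; apply F2_quarter_turns.
    destruct (Hy 1) as [-> | ->]; [nra | do 2 right; left | do 3 right]; split; lra.
  - right; apply F3_sixth_turns; [left; lra | apply Hy; nra].
  - left; apply F2_quarter_turns; left; split; nra.
Qed.

Definition has_small_nonzero (P : C -> Prop) : Prop :=
  forall d, 0 < d -> exists a, P a /\ a <> C0 /\ Cnorm a < d.

Section SmallElements.

Variable P : C -> Prop.
Hypothesis P1 : P C1.
Hypothesis P_add : forall a b, P a -> P b -> P (Cadd a b).
Hypothesis P_opp : forall a, P a -> P (Copp a).

Lemma P_mul_nat (k : nat) (a : C) : P a -> P (Cmul (INR k, 0) a).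
Proof.
  intro Pa; induction k as [|k IH].
  - replace (Cmul (INR 0, 0) a) with (Cadd C1 (Copp C1)) by (simpl; Cring); auto.
  - replace (Cmul (INR (S k), 0) a) with (Cadd (Cmul (INR k, 0) a) a)
      by (rewrite S_INR; Cring); auto.
Qed.

Lemma P_mul_int (m : Z) (a : C) : P a -> P (Cmul (IZR m, 0) a).
Proof.
  intro Pa; destruct m as [|p|p].
  - apply (P_mul_nat 0); assumption.
  - rewrite <- positive_nat_Z, <- INR_IZR_INZ; now apply P_mul_nat.
  - replace (Cmul (IZR (Z.neg p), 0) a) with (Copp (Cmul (INR (Pos.to_nat p), 0) a))
      by (rewrite <- Pos2Z.opp_pos, opp_IZR, <- positive_nat_Z, <- INR_IZR_INZ; Cring).
    now apply P_opp, P_mul_nat.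
Qed.

Lemma has_small_nonzero_contraction (w : C) :
  (forall a, P a -> P (Cmul w a)) -> w <> C0 -> Cnorm w < 1 -> has_small_nonzero P.
Proof.
  intros Pw Hw Hlt d Hd.
  assert (Ppow : forall k, P (Cpow w k)) by (induction k; simpl; auto).
  destruct (pow_lt_1_zero (Cnorm w)) with (y := d) as [N HN]; auto.
  { rewrite Rabs_right; [assumption | apply Rle_ge, Cnorm_ge0]. }
  exists (Cpow w N); repeat split; auto using Cpow_neq0.
  specialize (HN N (le_n N)); rewrite Rabs_right in HN.
  - now rewrite Cnorm_pow.
  - apply Rle_ge, pow_le, Cnorm_ge0.
Qed.

Lemma has_small_nonzero_unit_ratio (x y : R) :
  x ^ 2 + y ^ 2 = 1 ->
  (forall a, P a -> P (Cmul (x, y) a)) -> (forall a, P a -> P (Cmul (x, - y) a)) ->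
  ~ (F2 (x, y) \/ F3 (x, y)) -> has_small_nonzero P.
Proof.
  intros Hxy Pmu Pnu HF.
  set (m := Int_part (2 * x)); set (f := 2 * x - IZR m).
  assert (Pf : forall a, P a -> P (Cmul (f, 0) a)).
  { intros a Pa.
    replace (Cmul (f, 0) a)
      with (Cadd (Cadd (Cmul (x, y) a) (Cmul (x, - y) a)) (Copp (Cmul (IZR m, 0) a)))
      by (unfold f; Cring).
    auto using P_mul_int. }
  destruct (base_Int_part (2 * x)) as [Hm1 Hm2]; fold m in Hm1, Hm2.
  destruct (Req_dec f 0) as [Hf0 | Hf0].
  - exfalso; apply HF, (F2_or_F3_of_half_integer_real_part x y m Hxy).
    unfold f in Hf0; lra.
  - apply (has_small_nonzero_contraction (f, 0) Pf).
    + intro E; injection E; auto.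
    + rewrite Cnorm_real, Rabs_right; unfold f in *; lra.
Qed.

Lemma has_small_nonzero_ratio_not_F (mu nu : C) :
  (forall a, P a -> P (Cmul mu a)) -> (forall a, P a -> P (Cmul nu a)) ->
  Cmul nu mu = C1 -> ~ (F2 mu \/ F3 mu) -> has_small_nonzero P.
Proof.
  intros Pmu Pnu Hinv HF.
  assert (Hnorm : Cnorm nu * Cnorm mu = 1) by now rewrite <- Cnorm_mul, Hinv, Cnorm_C1.
  assert (Hmu0 : mu <> C0) by (intros ->; apply C1_neq0; rewrite <- Hinv; Cring).
  assert (Hnu0 : nu <> C0) by (intros ->; apply C1_neq0; rewrite <- Hinv; Cring).
  pose proof (Cnorm_ge0 nu).
  destruct (total_order_T (Cnorm mu) 1) as [[Hlt | Heq] | Hgt].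
  - exact (has_small_nonzero_contraction mu Pmu Hmu0 Hlt).
  - destruct mu as [x y], nu as [p q].
    pose proof (Cnorm_eq1 x y Heq) as Hxy.
    destruct (Cinv_unit_circle x y p q Hxy Hinv) as [-> ->].
    exact (has_small_nonzero_unit_ratio x y Hxy Pmu Pnu HF).
  - apply (has_small_nonzero_contraction nu Pnu Hnu0); nra.
Qed.

End SmallElements.

Definition left_inverse {n} (h g : aff n) : Prop := forall z i, act h (act g z) i = z i.

Lemma left_inverse_trans {n} (h g : aff n) (i : Fin.t n) :
  left_inverse h g -> Cadd (Cmul (ratio h) (trans g i)) (trans h i) = C0.
Proof.
  intro Hhg; rewrite <- (Hhg (fun _ => C0) i); unfold act; Cring.
Qed.

(** Needs a coordinate [i0]: in dimension 0 every map is the identity. *)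
Lemma left_inverse_ratio {n} (i0 : Fin.t n) (h g : aff n) :
  left_inverse h g -> Cmul (ratio h) (ratio g) = C1.
Proof.
  intro Hhg; pose proof (Hhg (fun _ => C1) i0) as E; unfold act in E.
  pose proof (left_inverse_trans h g i0 Hhg) as E0.
  transitivity (Csub (Cadd (Cmul (ratio h) (Cadd (Cmul (ratio g) C1) (trans g i0))) (trans h i0))
                     (Cadd (Cmul (ratio h) (trans g i0)) (trans h i0))); [Cring |].
  rewrite E, E0; Cring.
Qed.

Lemma act_ext {n} (g : aff n) (u u' : Cn n) (i : Fin.t n) :
  (forall j, u j = u' j) -> act g u i = act g u' i.
Proof. intro H; unfold act; now rewrite H. Qed.

Lemma act_unit_ratio {n} (t : aff n) (w : Cn n) (i : Fin.t n) :
  ratio t = C1 -> act t w i = Cadd (w i) (trans t i).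
Proof. intro Ht; unfold act; rewrite Ht; Cring. Qed.

Lemma fin_bounded {n} (f : Fin.t n -> R) : exists K, 0 <= K /\ forall i, f i <= K.
Proof.
  induction n as [|n IH].
  - exists 0; split; [lra | intro i; inversion i].
  - destruct (IH (fun i => f (Fin.FS i))) as [K [HK HfK]].
    exists (Rmax K (f Fin.F1)); split; [apply Rle_trans with K; auto; apply Rmax_l |].
    intro i; apply (Fin.caseS' i (fun i => f i <= Rmax K (f Fin.F1))).
    + apply Rmax_r.
    + intro j; apply Rle_trans with K; auto; apply Rmax_l.
Qed.

Section TranslationCoefficients.

Variables (n : nat) (G : aff n -> Prop) (i0 : Fin.t n).
Hypothesis G_id : G (id_aff n).
Hypothesis G_comp : forall g h, G g -> G h -> G (comp g h).
Hypothesis G_inv : forall g, G g -> exists h, G h /\ left_inverse h g.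

(** [g h = t h g] with [t = g h g^-1 h^-1], which has ratio 1. *)
Lemma commutator_translation (g h : aff n) :
  G g -> G h -> exists t, G t /\ ratio t = C1 /\
    forall z i, act g (act h z) i = Cadd (act h (act g z) i) (trans t i).
Proof.
  intros Gg Gh.
  destruct (G_inv g Gg) as [g' [Gg' Hg']], (G_inv h Gh) as [h' [Gh' Hh']].
  set (t := comp g (comp h (comp g' h'))).
  assert (Rt : ratio t = C1).
  { unfold t; cbn [ratio comp].
    transitivity (Cmul (Cmul (ratio g') (ratio g)) (Cmul (ratio h') (ratio h))); [Cring |].
    rewrite (left_inverse_ratio i0 g' g Hg'), (left_inverse_ratio i0 h' h Hh'); Cring. }
  exists t; split; [unfold t; auto | split; [exact Rt |]].
  intros z i; rewrite <- (act_unit_ratio t _ i Rt).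
  transitivity (act g (act h (act g' (act h' (act h (act g z))))) i).
  - apply act_ext; intro j; apply act_ext; intro k.
    rewrite <- (Hg' z k); apply act_ext; intro l; symmetry; apply Hh'.
  - unfold t, act; cbn [ratio trans comp]; Cring.
Qed.

Definition translation_coeff (v : Cn n) (a : C) : Prop :=
  exists s, G s /\ ratio s = C1 /\ forall i, trans s i = Cmul a (v i).

Lemma translation_coeff_add (v : Cn n) (a b : C) :
  translation_coeff v a -> translation_coeff v b -> translation_coeff v (Cadd a b).
Proof.
  intros [s1 [G1 [R1 T1]]] [s2 [G2 [R2 T2]]].
  exists (comp s1 s2); split; [auto |]; cbn [ratio trans comp]; rewrite R1, R2.
  split; [Cring | intro i; rewrite T1, T2; Cring].
Qed.

Lemma translation_coeff_opp (v : Cn n) (a : C) :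
  translation_coeff v a -> translation_coeff v (Copp a).
Proof.
  intros [s [Gs [Rs Ts]]]; destruct (G_inv s Gs) as [s' [Gs' Hs']].
  assert (Rs' : ratio s' = C1).
  { rewrite <- (left_inverse_ratio i0 s' s Hs'), Rs; Cring. }
  exists s'; split; [exact Gs' | split; [exact Rs' |]].
  intro i; pose proof (left_inverse_trans s' s i Hs') as E.
  rewrite Rs', Ts in E; apply (f_equal (fun u => Csub u (Cmul a (v i)))) in E.
  transitivity (Csub (Cadd (Cmul C1 (Cmul a (v i))) (trans s' i)) (Cmul a (v i))); [Cring |].
  rewrite E; Cring.
Qed.

(** Conjugating a translation by [g] multiplies its vector by the ratio of [g]. *)
Lemma translation_coeff_mul_ratio (v : Cn n) (g : aff n) :
  G g -> forall a, translation_coeff v a -> translation_coeff v (Cmul (ratio g) a).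
Proof.
  intros Gg a [s [Gs [Rs Ts]]]; destruct (G_inv g Gg) as [h [Gh Hhg]].
  pose proof (left_inverse_ratio i0 h g Hhg) as Rhg.
  exists (comp g (comp s h)); split; [auto |]; cbn [ratio trans comp]; rewrite Rs.
  split; [transitivity (Cmul (ratio h) (ratio g)); [Cring | exact Rhg] |].
  intro i; rewrite Ts.
  transitivity (Cadd (Cmul (ratio g) (Cadd (Cmul (ratio h) (trans g i)) (trans h i)))
    (Cadd (Cmul (Csub C1 (Cmul (ratio h) (ratio g))) (trans g i)) (Cmul (Cmul (ratio g) a) (v i))));
    [Cring |].
  rewrite (left_inverse_trans h g i Hhg), Rhg; Cring.
Qed.

Lemma orbit_not_discrete (v : Cn n) (z : Cn n) :
  v i0 <> C0 -> has_small_nonzero (translation_coeff v) -> ~ discrete (orbit G z).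
Proof.
  intros Hv Hsmall Hdisc.
  destruct (Hdisc z) as [eps [Heps Hiso]].
  { exists (id_aff n); split; [exact G_id | intro i; unfold act; simpl; Cring]. }
  destruct (fin_bounded (fun i => Cnorm (v i))) as [K [HK HvK]].
  destruct (Hsmall (eps / (K + 1))) as [a [[s [Gs [Rs Ts]]] [Ha0 Ha]]].
  { apply Rdiv_lt_0_compat; lra. }
  assert (Hdisp : forall i, Csub (act s z i) (z i) = Cmul a (v i)).
  { intro i; rewrite act_unit_ratio, Ts by exact Rs; Cring. }
  apply (Cmul_neq0 a (v i0) Ha0 Hv); rewrite <- Hdisp.
  rewrite (Hiso (act s z)); [Cring | exists s; split; auto |].
  intro i; rewrite Hdisp, Cnorm_mul.
  assert (Heps' : Cnorm a * (K + 1) < eps).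
  { apply (Rmult_lt_compat_r (K + 1)) in Ha; [| lra].
    unfold Rdiv in Ha; rewrite Rmult_assoc, Rinv_l in Ha; lra. }
  pose proof (Cnorm_gt0 a Ha0); pose proof (HvK i); simpl in *; nra.
Qed.

End TranslationCoefficients.

Theorem corollary1p3 (n : nat) (G : aff n -> Prop) :
  is_subgroup_H G ->
  non_abelian G ->
  (exists c, Lambda G c /\ ~ is_real c) ->
  (exists g, G g /\ ~ in_SRn g) ->
  forall z : Cn n, ~ discrete (orbit G z).
Proof.
  intros [_ [G_id [G_comp G_inv]]] [g [h [Gg [Gh [z0 [i0 Hgh]]]]]] _ [g0 [Gg0 Hg0]] z.
  destruct (commutator_translation n G i0 G_comp G_inv g h Gg Gh) as [t [Gt [Rt Ht]]].
  assert (Hv : trans t i0 <> C0).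
  { intro E; apply Hgh; rewrite Ht, E; Cring. }
  destruct (G_inv g0 Gg0) as [h0 [Gh0 Hh0]].
  apply (orbit_not_discrete n G i0 G_id (trans t) z Hv).
  apply has_small_nonzero_ratio_not_F with (mu := ratio g0) (nu := ratio h0).
  - exists t; repeat split; auto; intro i; Cring.
  - exact (translation_coeff_add n G G_comp (trans t)).
  - exact (translation_coeff_opp n G i0 G_inv (trans t)).
  - exact (translation_coeff_mul_ratio n G i0 G_comp G_inv (trans t) g0 Gg0).
  - exact (translation_coeff_mul_ratio n G i0 G_comp G_inv (trans t) h0 Gh0).
  - exact (left_inverse_ratio i0 h0 g0 Hh0).
  - exact Hg0.
Qed.
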